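(* Let $q$ be a self-join-free Boolean conjunctive query, let $q_0\subseteq q$, let $\mathbf{db}$ be a database, and let $\mathbf{o}$ be a garbage set for $q_0$ in $\mathbf{db}$. If every garbage set for $q_0$ in $\mathbf{db}\setminus\mathbf{o}$ is empty, then $\mathbf{o}$ is the maximal (with respect to $\subseteq$) garbage set for $q_0$ in $\mathbf{db}$.
   Context: Every relation name has a signature $[n,k]$ ($1\le k\le n$; primary-key positions $1,\dots,k$) and a mode in $\{\mathsf{c},\mathsf{i}\}$. Facts are variable-free atoms; facts are key-equal if same relation name and same primary-key values. A database is a finite set of facts with no two distinct key-equal facts of mode $\mathsf{c}$, all of whose relation names occur in $q$. The block of a fact $A$ in $\mathbf{db}$ is the set of facts of $\mathbf{db}$ key-equal to $A$. A repair of a set of facts is a maximal subset without two distinct key-equal facts. A self-join-free Boolean conjunctive query is a finite set of atoms with distinct relation names; for a fact $A$, $\mathrm{atom}(A)$ is the atom of $q$ with the same relation name. A subset $\mathbf{o}\subseteq\mathbf{db}$ is a garbage set for $q_0$ in $\mathbf{db}$ if (1) for every $A\in\mathbf{o}$, $\mathrm{atom}(A)\in q_0$ and the block of $A$ in $\mathbf{db}$ is included in $\mathbf{o}$; and (2) there is a repair $\mathbf{r}$ of $\mathbf{o}$ such that for every valuation $\theta$ of the variables of $q$, if $\theta(q)\subseteq(\mathbf{db}\setminus\mathbf{o})\cup\mathbf{r}$ then $\theta(q_0)\cap\mathbf{r}=\emptyset$. Garbage sets are closed under union, so a unique maximal garbage set exists. *)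

From Stdlib Require Import List Arith.
Import ListNotations.

Inductive mode := ModeC | ModeI.

(* A relation name carries its signature [arity, keylen] and its mode.
   Primary-key positions are 1..keylen. *)
Record relname := RelName { rid : nat; arity : nat; keylen : nat; rmode : mode }.

Definition var := nat.
Definition const := nat.

Inductive term := TVar (x : var) | TConst (c : const).

Record atom := Atom { arel : relname; aargs : list term }.
Record fact := Fact { frel : relname; fargs : list const }.

Definition factset := fact -> Prop.

Definition subset (A B : factset) : Prop := forall f, A f -> B f.
Definition setminus (A B : factset) : factset := fun f => A f /\ ~ B f.
Definition finite_set (A : factset) : Prop := exists l : list fact, forall f, A f -> In f l.

Definition wf_relname (R : relname) : Prop := 1 <= keylen R /\ keylen R <= arity R.

Definition sjf_bcq (q : list atom) : Prop :=
  NoDup q /\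
  (forall a, In a q -> wf_relname (arel a) /\ length (aargs a) = arity (arel a)) /\
  (forall a b, In a q -> In b q -> arel a = arel b -> a = b).

Definition key_equal (A B : fact) : Prop :=
  frel A = frel B /\ firstn (keylen (frel A)) (fargs A) = firstn (keylen (frel B)) (fargs B).

Definition occurs_in (q : list atom) (R : relname) : Prop := exists a, In a q /\ arel a = R.

Definition database (q : list atom) (db : factset) : Prop :=
  finite_set db /\
  (forall A, db A -> length (fargs A) = arity (frel A)) /\
  (forall A B, db A -> db B -> key_equal A B -> rmode (frel A) = ModeC -> A = B) /\
  (forall A, db A -> occurs_in q (frel A)).

Definition consistent (s : factset) : Prop :=
  forall A B, s A -> s B -> key_equal A B -> A = B.

Definition repair_of (r o : factset) : Prop :=
  subset r o /\ consistent r /\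
  (forall s, subset r s -> subset s o -> consistent s -> subset s r).

Definition valuation := var -> const.

Definition apply_term (th : valuation) (t : term) : const :=
  match t with TVar x => th x | TConst c => c end.

Definition apply_atom (th : valuation) (a : atom) : fact :=
  Fact (arel a) (map (apply_term th) (aargs a)).

Definition garbage (q q0 : list atom) (db o : factset) : Prop :=
  subset o db /\
  (forall A, o A -> occurs_in q0 (frel A) /\ (forall B, db B -> key_equal A B -> o B)) /\
  (exists r, repair_of r o /\
     forall th : valuation,
       (forall a, In a q -> (setminus db o (apply_atom th a) \/ r (apply_atom th a))) ->
       forall a, In a q0 -> ~ r (apply_atom th a)).

Definition maximal_garbage (q q0 : list atom) (db o : factset) : Prop :=
  garbage q q0 db o /\ (forall o', garbage q q0 db o' -> subset o' o).

From Stdlib Require Import List Classical.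

(* Proof idea: a garbage set [o] is closed under blocks, so no fact outside
   [o] is key-equal to a fact inside it.  Hence removing [o] from any garbage
   set [o'] of [db] (and from its witnessing repair) leaves a garbage set of
   [db \ o]; by hypothesis that set is empty, i.e. [o'] is contained in [o]. *)

Definition block_closed (db o : factset) : Prop :=
  forall A, o A -> forall B, db B -> key_equal A B -> o B.

Lemma key_equal_sym A B : key_equal A B -> key_equal B A.
Proof.
  intros [Hrel Hkey]. split; [now symmetry|].
  rewrite Hrel in Hkey |- *. now symmetry.
Qed.

Lemma garbage_block_closed q q0 db o : garbage q q0 db o -> block_closed db o.
Proof. intros (_ & Hblk & _) A HA. exact (proj2 (Hblk A HA)). Qed.

Lemma repair_of_setminus db o o' r :
  block_closed db o -> subset o' db -> repair_of r o' ->
  repair_of (setminus r o) (setminus o' o).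
Proof.
  intros Hclosed Ho'db (Hro' & Hrcons & Hrmax).
  split; [|split].
  - intros f [Hr Ho]. split; auto.
  - intros A B [HA _] [HB _]. now apply Hrcons.
  - intros s Hrs Hso' Hscons.
    (* A fact of [s] lies outside [o], so any fact of [r] key-equal to it
       lies outside [o] too, hence in [r \ o], which is contained in [s]. *)
    assert (Hmixed : forall A B, s A -> r B -> key_equal A B -> A = B).
    { intros A B HA HB HAB.
      destruct (Hso' A HA) as [HAo' HAo].
      assert (HBo : ~ o B).
      { intro HBo. apply HAo, (Hclosed B HBo A (Ho'db A HAo')).
        now apply key_equal_sym. }
      apply Hscons; auto. apply Hrs. now split. }
    assert (Hunion : subset (fun f => s f \/ r f) r).
    { apply Hrmax.
      - intros f Hf. now right.
      - intros f [Hf|Hf]; [exact (proj1 (Hso' f Hf))|exact (Hro' f Hf)].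
      - intros A B [HA|HA] [HB|HB] HAB.
        + now apply Hscons.
        + now apply Hmixed.
        + symmetry. apply Hmixed; auto. now apply key_equal_sym.
        + now apply Hrcons. }
    intros f Hf. split; [apply Hunion; now left|exact (proj2 (Hso' f Hf))].
Qed.

Lemma garbage_setminus q q0 db o o' :
  block_closed db o -> garbage q q0 db o' ->
  garbage q q0 (setminus db o) (setminus o' o).
Proof.
  intros Hclosed (Ho'db & Hblk & r & Hrepair & Hquery).
  split; [|split].
  - intros f [Hf Ho]. split; auto.
  - intros A [HA HAo]. split; [exact (proj1 (Hblk A HA))|].
    intros B [HB HBo] HAB. split; auto. exact (proj2 (Hblk A HA) B HB HAB).
  - exists (setminus r o). split; [now apply repair_of_setminus with db|].
    intros th Hsat a Ha0 [Hra _].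
    apply (Hquery th) with a; auto.
    intros b Hb. destruct (Hsat b Hb) as [[[Hdb Ho] Hnot]|[Hrb _]].
    + left. split; auto. intro Ho'. apply Hnot. now split.
    + now right.
Qed.

Theorem corollary31 (q q0 : list atom) (db o : factset) :
  sjf_bcq q -> incl q0 q -> database q db ->
  garbage q q0 db o ->
  (forall o', garbage q q0 (setminus db o) o' -> forall f, ~ o' f) ->
  maximal_garbage q q0 db o.
Proof.
  intros _ _ _ Hgarbage Hempty. split; [exact Hgarbage|].
  intros o' Hgarbage' f Hf. apply NNPP. intro Hfo.
  apply (Hempty (setminus o' o)) with f.
  - apply garbage_setminus; auto. now apply garbage_block_closed with q q0.
  - now split.
Qed.
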